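(* Let $G$ be a loopy graph. Then there exist infinitely many numerical semigroups $S$ such that the graph $G(S)$ is isomorphic to $G$.
   Context: A loopy graph is a finite graph with no isolated vertices and no multiple edges, but possibly with loops. A numerical semigroup is a subset $S\subseteq\mathbb N$ containing $0$, closed under addition, with finite complement; $m=\min(S\setminus\{0\})$ is its multiplicity. Let $X=\{s\in S\setminus\{0\}: s-m\notin S\}$ (nonzero Apéry elements). The graph $G(S)$ has edge set consisting of all subsets $\{x,y\}\subseteq X$ (with $x=y$ allowed, giving a loop) such that $x+y\in X$, and vertex set the set of all endvertices of these edges. *)

From mathcomp Require Import all_boot.
Set Implicit Arguments. Unset Strict Implicit. Unset Printing Implicit Defensive.

(* A loopy graph: finite vertex type T, symmetric edge relation e
   (loops allowed: e x x), no multiple edges (automatic for a relation),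
   no isolated vertices. *)
Definition loopy_graph (T : finType) (e : rel T) : Prop :=
  symmetric e /\ (forall x : T, exists y : T, e x y).

Definition numerical_semigroup (S : nat -> bool) : Prop :=
  [/\ S 0,
      (forall a b, S a -> S b -> S (a + b)) &
      (exists N, forall n, N <= n -> S n)].

Definition is_multiplicity (S : nat -> bool) (m : nat) : Prop :=
  [/\ S m, 0 < m & forall s, S s -> 0 < s -> m <= s].

(* Nonzero Apery elements X = { s in S \ {0} : s - m notin S }, where s - m
   is the integer difference (so if s < m it is negative, hence not in S). *)
Definition apery_nz (S : nat -> bool) (x : nat) : Prop :=
  exists m, is_multiplicity S m /\
    [/\ S x, 0 < x & ~~ ((m <= x) && S (x - m))].

Definition GS_edge (S : nat -> bool) (x y : nat) : Prop :=
  [/\ apery_nz S x, apery_nz S y & apery_nz S (x + y)].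

Definition GS_vertex (S : nat -> bool) (v : nat) : Prop :=
  exists w, GS_edge S v w.

Definition iso_to_GS (T : finType) (e : rel T) (S : nat -> bool) : Prop :=
  exists f : T -> nat,
    [/\ injective f,
        (forall v, GS_vertex S v <-> exists x, f x = v) &
        (forall x y, e x y <-> GS_edge S (f x) (f y))].

(* Number the vertices by a Sidon set of small integers code u and, for N
   large, take S = {0, 3N} u {4N + code u} u {5N + code u + code v : uv is not
   an edge} u [6N, oo).  Then 3N is the multiplicity and every 4N + code u is
   an Apery element; their sum 8N + code u + code v is Apery exactly when
   5N + code u + code v is missing from S, i.e. when uv is an edge, because by
   the Sidon property that number names the pair uv only.  Every other Apery
   element is too large to lie on an edge, and distinct N give distinct
   semigroups. *)
From mathcomp Require Import all_boot.
From mathcomp Require Import zify.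
Set Implicit Arguments. Unset Strict Implicit.

Definition sidon (T : Type) (code : T -> nat) : Prop :=
  forall u v x y, code u + code v = code x + code y ->
    (u = x /\ v = y) \/ (u = y /\ v = x).

Lemma sidon_inj (T : Type) (code : T -> nat) : sidon code -> injective code.
Proof. by move=> sid u x /(congr1 (fun n => n + n)) /sid [[]|[]]. Qed.

Lemma sidon_comp (T U : Type) (code : U -> nat) (g : T -> U) :
  sidon code -> injective g -> sidon (code \o g).
Proof.
move=> sid g_inj u v x y /sid [[/g_inj-> /g_inj->]|[/g_inj-> /g_inj->]].
  by left.
by right.
Qed.

Lemma logn2_expn4D a b : a <= b -> logn 2 (4 ^ a + 4 ^ b) = 2 * a + (a == b).
Proof.
have expn4E k : 4 ^ k = 2 ^ (2 * k) by rewrite expnM.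
move=> le_ab; case: eqP => [<-|/eqP ne_ab].
  by rewrite expn4E addnn -mul2n -expnS pfactorK // addn1.
have lt_ab : a < b by rewrite ltn_neqAle ne_ab.
have -> : 4 ^ a + 4 ^ b = (1 + 4 ^ (b - a)) * 2 ^ (2 * a).
  by rewrite mulnDl mul1n -expn4E -expnD subnK.
rewrite logn_Gauss ?pfactorK ?addn0 // coprime2n.
have : 0 < b - a by rewrite subn_gt0.
by case: (b - a) => // k _; rewrite expnS oddD oddM.
Qed.

Lemma sidon_expn4 : sidon (expn 4).
Proof.
have sorted a b c d : a <= b -> c <= d -> 4 ^ a + 4 ^ b = 4 ^ c + 4 ^ d ->
    a = c /\ b = d.
  move=> le_ab le_cd eq_sum.
  (* the 2-adic valuation of the sum determines min(a, b) and whether a = b *)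
  have := logn2_expn4D le_ab; rewrite eq_sum logn2_expn4D //.
  have [eq_ac _|] := eqVneq a c; last by case: (a == b); case: (c == d); lia.
  by move: eq_sum; rewrite -eq_ac => /addnI /eqP; rewrite eqn_exp2l // => /eqP.
move=> a b c d /=; case: (leqP a b) => ab; case: (leqP c d) => cd eq_sum.
- by left; apply: sorted.
- by right; apply: sorted ab (ltnW cd) _; rewrite eq_sum addnC.
- rewrite addnC in eq_sum.
  by right; have [] := sorted _ _ _ _ (ltnW ab) cd eq_sum.
- rewrite addnC [4 ^ c + _]addnC in eq_sum.
  by left; have [] := sorted _ _ _ _ (ltnW ab) (ltnW cd) eq_sum.
Qed.

Lemma is_multiplicity_uniq (S : nat -> bool) m m' :
  is_multiplicity S m -> is_multiplicity S m' -> m = m'.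
Proof.
case=> Sm m_gt0 m_min [Sm' m'_gt0 m'_min].
by apply/eqP; rewrite eqn_leq m_min ?m'_min.
Qed.

Lemma apery_nzE (S : nat -> bool) m x : is_multiplicity S m ->
  apery_nz S x <-> [/\ S x, 0 < x & ~~ ((m <= x) && S (x - m))].
Proof.
move=> mult_m; split; last by exists m.
by case=> m' [/(is_multiplicity_uniq mult_m) <-].
Qed.

Lemma apery_nz_gt_mult (S : nat -> bool) m x : S 0 -> is_multiplicity S m ->
  apery_nz S x -> m < x.
Proof.
move=> S0 mult_m /(apery_nzE _ mult_m) [Sx x_gt0 not_Sxm].
case: mult_m => _ _ /(_ x Sx x_gt0); rewrite leq_eqVlt => /orP [/eqP eq_mx|//].
by move: not_Sxm; rewrite eq_mx subnn leqnn S0.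
Qed.

Section GraphSemigroup.

Variables (T : finType) (e : rel T) (code : T -> nat) (N : nat).
Hypotheses (e_sym : symmetric e) (code_sidon : sidon code).
Hypotheses (N_gt0 : 0 < N) (code_lt : forall u, 2 * code u < N).

Definition graph_semigroup (s : nat) : bool :=
  (s == 0) ||
  [|| s == 3 * N, [exists u, s == 4 * N + code u],
      [exists u, exists v, ~~ e u v && (s == 5 * N + code u + code v)]
    | 6 * N <= s].

Local Notation S := graph_semigroup.

Lemma graph_semigroup_gap s : S s -> s = 0 \/ 3 * N <= s.
Proof.
case/orP => [/eqP|/or4P [/eqP|/existsP [u /eqP]|
                          /existsP [u /existsP [v /andP [_ /eqP]]]|]]; lia.
Qed.

Lemma graph_semigroup_low s : 0 < s < 3 * N -> S s = false.
Proof. by move=> s_range; apply/negP => /graph_semigroup_gap; lia. Qed.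

Lemma graph_semigroup_high s : 6 * N <= s -> S s.
Proof. by move=> s_ge; rewrite /S s_ge !orbT. Qed.

Lemma graph_semigroup_vertex u : S (4 * N + code u).
Proof. by apply/orP; right; apply/or4P; apply: Or42; apply/existsP; exists u. Qed.

Lemma graph_semigroup_pair u v : S (5 * N + code u + code v) = ~~ e u v.
Proof.
have := code_lt u; have := code_lt v => cv cu.
apply/idP/idP => [|ne_uv]; last first.
  apply/orP; right; apply/or4P; apply: Or43.
  by apply/existsP; exists u; apply/existsP; exists v; rewrite ne_uv eqxx.
case/orP => [/eqP|/or4P [/eqP|/existsP [w /eqP]|/existsP [x /existsP [y]]|]];
  [lia | lia | have := code_lt w; lia | | lia].
case/andP=> ne_xy /eqP eq_sum.
have /code_sidon [[-> ->]|[-> ->]] // : code u + code v = code x + code y by lia.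
by rewrite e_sym.
Qed.

Lemma graph_semigroup_window s : 3 * N < s < 6 * N -> S s ->
  (exists u, s = 4 * N + code u) \/ 5 * N <= s.
Proof.
move=> s_range /orP [/eqP|/or4P [/eqP|/existsP [u /eqP ->]|
                                  /existsP [u /existsP [v /andP [_ /eqP]]]|]];
  by [lia | left; exists u | right; lia].
Qed.

Lemma graph_semigroupD a b : S a -> S b -> S (a + b).
Proof.
move=> Sa Sb; have [-> //|a_ge] := graph_semigroup_gap Sa.
have [->|b_ge] := graph_semigroup_gap Sb; first by rewrite addn0.
by apply: graph_semigroup_high; lia.
Qed.

Lemma numerical_graph_semigroup : numerical_semigroup S.
Proof.
split=> //; first exact: graph_semigroupD.
by exists (6 * N) => n; apply: graph_semigroup_high.
Qed.

Lemma multiplicity_graph_semigroup : is_multiplicity S (3 * N).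
Proof.
split; [by rewrite /S eqxx orbT | lia |].
by move=> s /graph_semigroup_gap; lia.
Qed.

Local Notation apery_nzE_S := (apery_nzE _ multiplicity_graph_semigroup).

Definition vertex_elt (u : T) : nat := 4 * N + code u.

Lemma vertex_elt_inj : injective vertex_elt.
Proof. by move=> u v /addnI /(sidon_inj code_sidon). Qed.

Lemma apery_vertex_elt u : apery_nz S (vertex_elt u).
Proof.
apply/apery_nzE_S; rewrite /vertex_elt.
split; [exact: graph_semigroup_vertex | lia |].
by rewrite graph_semigroup_low ?andbF //; have := code_lt u; lia.
Qed.

Lemma GS_edge_vertex_elt u v : GS_edge S (vertex_elt u) (vertex_elt v) <-> e u v.
Proof.
have sum_ge : 3 * N <= vertex_elt u + vertex_elt v by rewrite /vertex_elt; lia.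
have sum_sub : vertex_elt u + vertex_elt v - 3 * N = 5 * N + code u + code v.
  by rewrite /vertex_elt; lia.
have S_sum : S (vertex_elt u + vertex_elt v).
  by apply: graph_semigroup_high; rewrite /vertex_elt; lia.
have apery_sum : apery_nz S (vertex_elt u + vertex_elt v) <-> e u v.
  rewrite apery_nzE_S sum_sub graph_semigroup_pair sum_ge /= negbK.
  by split=> [[] //|euv]; split=> //; rewrite /vertex_elt; lia.
by split=> [[_ _ /apery_sum //]|/apery_sum]; split=> //; exact: apery_vertex_elt.
Qed.

(* Apery elements exceed 3N; for an edge wz, w + z - 3N is not in S, hence
   below 6N, so w and z lie in (3N, 6N); then z >= 4N rules out w >= 5N. *)
Lemma GS_vertex_vertex_elt (no_isolated : forall u, exists v, e u v) w :
  GS_vertex S w <-> exists u, vertex_elt u = w.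
Proof.
split; last first.
  case=> u <-; have [v euv] := no_isolated u.
  by exists (vertex_elt v); apply/GS_edge_vertex_elt.
case=> z [aw az awz].
have S0 : S 0 by [].
have w_gt := apery_nz_gt_mult S0 multiplicity_graph_semigroup aw.
have z_gt := apery_nz_gt_mult S0 multiplicity_graph_semigroup az.
have sum_lt : w + z < 9 * N.
  case/apery_nzE_S: awz => _ _; rewrite ltnNge; apply: contra => sum_ge.
  by rewrite graph_semigroup_high ?andbT; lia.
case/apery_nzE_S: aw => Sw _ _; case/apery_nzE_S: az => Sz _ _.
have z_ge : 4 * N <= z.
  by have [[u ->]|] := graph_semigroup_window (ltac:(lia) : 3 * N < z < 6 * N) Sz; lia.
have [[u ->]|w_ge] := graph_semigroup_window (ltac:(lia) : 3 * N < w < 6 * N) Sw.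
  by exists u.
case/apery_nzE_S: awz => _ _; rewrite graph_semigroup_high; lia.
Qed.

Lemma graph_semigroup_iso : (forall u, exists v, e u v) -> iso_to_GS e S.
Proof.
move=> no_isolated; exists vertex_elt; split.
- exact: vertex_elt_inj.
- exact: GS_vertex_vertex_elt.
- by move=> u v; rewrite GS_edge_vertex_elt.
Qed.

End GraphSemigroup.

Lemma graph_semigroup_separated (T : finType) (e : rel T) code N N' :
  0 < N < N' ->
  graph_semigroup e code N (3 * N) && ~~ graph_semigroup e code N' (3 * N).
Proof.
move=> N_range; rewrite (@graph_semigroup_low _ _ _ N') ?andbT; try lia.
by rewrite /graph_semigroup eqxx orbT.
Qed.

Theorem theorem6p1 (T : finType) (e : rel T) :
  loopy_graph e ->
  exists Sq : nat -> (nat -> bool),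
    (forall i j, i <> j -> exists n, Sq i n != Sq j n) /\
    (forall i, numerical_semigroup (Sq i) /\ iso_to_GS e (Sq i)).
Proof.
case=> e_sym no_isolated.
pose code (u : T) := 4 ^ enum_rank u.
have code_sidon : sidon code.
  by apply: (sidon_comp sidon_expn4); apply: inj_comp val_inj enum_rank_inj.
pose N i := 2 * 4 ^ #|T| + i.+1.
have code_lt i u : 2 * code u < N i.
  have : code u < 4 ^ #|T| by rewrite ltn_exp2l.
  rewrite /N; lia.
have separated i j : i < j ->
    exists n, graph_semigroup e code (N i) n != graph_semigroup e code (N j) n.
  move=> lt_ij; exists (3 * N i).
  have N_lt : 0 < N i < N j by rewrite /N; lia.
  by have /andP [-> /negbTE ->] := graph_semigroup_separated e code N_lt.
exists (fun i => graph_semigroup e code (N i)); split=> [i j /eqP|i].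
  rewrite neq_ltn => /orP [/separated //|/separated [n]].
  by exists n; rewrite eq_sym.
have N_gt0 : 0 < N i by rewrite /N addnS.
split; first exact: numerical_graph_semigroup.
exact: graph_semigroup_iso e_sym code_sidon N_gt0 (code_lt i) no_isolated.
Qed.
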